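(* Let $K\subset\mathbb R^{2d-2}$ be a compact set such that $\pi_0(K)$ has non-empty interior in $\mathbb R^{d-1}$, where $\pi_0:\mathbb R^{2d-2}\to\mathbb R^{d-1}$ is the projection onto the first $d-1$ coordinates. Writing points of $K$ as $(\mathbf v,\mathbf a)$ with $\mathbf v,\mathbf a\in\mathbb R^{d-1}$, let $$\mathbb K_0=\bigcup_{(\mathbf v,\mathbf a)\in K}\{(\mathbf a,0)+t(\mathbf v,1): t\in[0,1]\}\subset\mathbb R^d.$$ Then some finite union of rotated copies of $\mathbb K_0$ is a Kakeya set in $\mathbb R^d$.
   Context: A Kakeya set in $\mathbb R^d$ is a compact set containing a unit line segment in every direction. *)

From HB Require Import structures.
From mathcomp Require Import all_boot all_order all_algebra.
From mathcomp Require Import all_classical all_reals all_analysis.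
Set Implicit Arguments. Unset Strict Implicit. Unset Printing Implicit Defensive.
Import Order.TTheory GRing.Theory Num.Theory.
Import numFieldNormedType.Exports.
Local Open Scope classical_set_scope.
Local Open Scope ring_scope.

Definition sqnorm (R : realType) (m : nat) (e : 'rV[R]_m) : R :=
  \sum_(i < m) e ord0 i ^+ 2.

Definition kakeya (R : realType) (m : nat) (E : set 'rV[R]_m) : Prop :=
  compact E /\
  forall e : 'rV[R]_m, sqnorm e = 1 ->
    exists x : 'rV[R]_m,
      [set x + t *: e | t in `[0, 1]%classic] `<=` E.

Definition rotation (R : realType) (m : nat) (Q : 'M[R]_m) : Prop :=
  Q *m Q^T = 1%:M /\ \det Q = 1.

Definition rotate (R : realType) (m : nat) (Q : 'M[R]_m) (A : set 'rV[R]_m)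
  : set 'rV[R]_m := [set x *m Q | x in A].

Definition pi0 (R : realType) (n : nat) (p : 'rV[R]_(n + n)) : 'rV[R]_n :=
  lsubmx p.

Definition K0 (R : realType) (n : nat) (K : set 'rV[R]_(n + n))
  : set 'rV[R]_(n + 1) :=
  [set y | exists p, K p /\ exists t : R, 0 <= t <= 1 /\
     y = row_mx (rsubmx p) (0 : 'rV[R]_1) + t *: row_mx (lsubmx p) (1 : 'rV[R]_1)].

From HB Require Import structures.
From mathcomp Require Import all_boot all_order all_algebra.
From mathcomp Require Import all_classical all_reals all_analysis.
From mathcomp Require Import lra ring.
Set Implicit Arguments. Unset Strict Implicit. Unset Printing Implicit Defensive.
Import Order.TTheory GRing.Theory Num.Theory.
Import numFieldNormedType.Exports.
Local Open Scope classical_set_scope.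
Local Open Scope ring_scope.

(* Let ball(v0, eps) lie in pi0(K). The directions w with w_d <> 0 whose slope
   w_{<d} / w_d lies in ball(v0, eps) form an open cone, and each such w is a
   multiple lam (v, 1) of the direction of a segment of K0; for a unit vector w
   we have |lam| <= 1 because |(v, 1)| >= 1, so a unit segment in direction w
   fits inside that segment of K0. Cayley transforms give, for every unit e, a
   rotation moving e onto the line through (v0, 1), which lies in the cone
   apart from 0. Hence the cone's preimages under rotations cover the unit
   sphere, and by compactness finitely many rotations suffice. The union of
   the rotated copies is compact since K0 is a continuous image of
   K x [0, 1]. *)

Section MatrixContinuity.
Variable R : numFieldType.

Lemma coordwise_continuous (T : topologicalType) p q (f : T -> 'M[R]_(p, q)) :
  (forall i j, continuous (fun x => f x i j)) -> continuous f.
Proof.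
move=> fc x A /nbhs_ballP [e e0 eA].
apply: (filterS (P := fun y => forall i j, ball (f x i j) e (f y i j))).
  by move=> y fy; apply: eA; split.
apply: filter_forall => i; apply: filter_forall => j.
exact/(fc i j x)/nbhsx_ballx.
Qed.

Lemma row_mx_continuous (T : topologicalType) m n1 n2
    (f : T -> 'M[R]_(m, n1)) (g : T -> 'M[R]_(m, n2)) :
  continuous f -> continuous g -> continuous (fun x => row_mx (f x) (g x)).
Proof.
move=> fc gc; apply: coordwise_continuous => i j.
case: (split_ordP j) => k ->.
- have -> : (fun x => row_mx (f x) (g x) i (lshift n2 k)) = (fun x => f x i k).
    by apply: funext => x; rewrite row_mxEl.
  by move=> x; apply: continuous_comp (fc x) (@coord_continuous _ _ _ i k (f x)).
- have -> : (fun x => row_mx (f x) (g x) i (rshift n1 k)) = (fun x => g x i k).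
    by apply: funext => x; rewrite row_mxEr.
  by move=> x; apply: continuous_comp (gc x) (@coord_continuous _ _ _ i k (g x)).
Qed.

Lemma mulmxr_continuous p q r (Q : 'M[R]_(q, r)) :
  continuous (fun x : 'M[R]_(p, q) => x *m Q).
Proof.
apply: coordwise_continuous => i j.
under eq_fun do rewrite mxE.
apply: continuous_big => [|k _ x]; first exact: add_continuous.
apply: (@continuousM _ _ (fun x : 'M[R]_(p, q) => x i k) (fun=> Q k j)).
  exact: coord_continuous.
exact: cst_continuous.
Qed.

End MatrixContinuity.

Lemma rotate_compact (R : realType) m (Q : 'M[R]_m) (A : set 'rV[R]_m) :
  compact A -> compact (rotate Q A).
Proof.
move=> cA; apply: continuous_compact => //.
exact/continuous_subspaceT/mulmxr_continuous.
Qed.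

Lemma bigcup_rotate_compact (R : realType) m (s : seq 'M[R]_m) (A : set 'rV[R]_m) :
  compact A -> compact [set y | exists2 Q, Q \in s & rotate Q A y].
Proof.
move=> cA; rewrite -[X in compact X]/(\bigcup_(Q in [set` s]) rotate Q A).
by rewrite bigcup_seq; apply: bigsetU_compact => Q _; apply: rotate_compact.
Qed.

Lemma K0_compact (R : realType) n (K : set 'rV[R]_(n + n)) :
  compact K -> compact (K0 K).
Proof.
move=> cK.
pose f (z : 'rV[R]_(n + n) * R) :=
  row_mx (rsubmx z.1) (0 : 'rV[R]_1) + z.2 *: row_mx (lsubmx z.1) (1 : 'rV[R]_1).
have -> : K0 K = f @` (K `*` `[0, 1]).
  apply/seteqP; split => [_ [p [Kp [t [t01 ->]]]]|_ [[p t] [/= Kp t01] <-]].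
    by exists (p, t) => //; split => //=; rewrite in_itv.
  by exists p; split => //; exists t; move: t01; rewrite /= in_itv.
rewrite {}/f; apply: continuous_compact; last exact/compact_setX/segment_compact.
apply: continuous_subspaceT => z.
have row_fst_continuous (h : 'rV[R]_(n + n) -> 'rV[R]_n) (c : 'rV[R]_1) :
    continuous h -> continuous (fun z : 'rV[R]_(n + n) * R => row_mx (h z.1) c).
  move=> hc; apply: row_mx_continuous => [w|]; last exact: cst_continuous.
  by apply: (@continuous_comp _ _ _ fst h); [exact: cvg_fst | exact: hc].
apply: (@continuousD R _ _ (fun z : 'rV[R]_(n + n) * R => row_mx (rsubmx z.1) 0)
                          (fun z : 'rV[R]_(n + n) * R => z.2 *: row_mx (lsubmx z.1) 1)).
  by apply: (row_fst_continuous rsubmx); exact: continuous_rsubmx.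
apply: continuousZ; first exact: cvg_snd.
by apply: (row_fst_continuous lsubmx); exact: continuous_lsubmx.
Qed.

Section SquaredNorm.
Variable R : realType.

Lemma sqnormE m (x : 'rV[R]_m) : x *m x^T = (sqnorm x)%:M.
Proof.
rewrite [LHS]mx11_scalar mxE; congr (_%:M).
by apply: eq_bigr => k _; rewrite !mxE expr2.
Qed.

Lemma sqnormZ m (a : R) (x : 'rV[R]_m) : sqnorm (a *: x) = a ^+ 2 * sqnorm x.
Proof. by rewrite /sqnorm mulr_sumr; apply: eq_bigr => i _; rewrite mxE exprMn. Qed.

Lemma sqnorm_orthogonal m (Q : 'M[R]_m) (x : 'rV[R]_m) :
  Q *m Q^T = 1%:M -> sqnorm (x *m Q) = sqnorm x.
Proof.
move=> QQ; have /matrixP/(_ 0 0) : (sqnorm (x *m Q))%:M = (sqnorm x)%:M :> 'M[R]_1.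
  by rewrite -!sqnormE trmx_mul mulmxA -(mulmxA x) QQ mulmx1.
by rewrite !mxE.
Qed.

Lemma sqr_coord_le_sqnorm m (x : 'rV[R]_m) i : x 0 i ^+ 2 <= sqnorm x.
Proof. by rewrite /sqnorm (bigD1 i) //= lerDl sumr_ge0 // => k _; apply: sqr_ge0. Qed.

Lemma sqnormD m (x y : 'rV[R]_m) :
  sqnorm (x + y) = sqnorm x + 2 * (x *m y^T) 0 0 + sqnorm y.
Proof.
rewrite /sqnorm mxE mulr_sumr -!big_split; apply: eq_bigr => i _.
by rewrite /= !mxE sqrrD; ring.
Qed.

Lemma sqnorm_eq0 m (x : 'rV[R]_m) : (sqnorm x == 0) = (x == 0).
Proof.
apply/idP/eqP => [/eqP x0|->]; last by rewrite /sqnorm big1 // => i _; rewrite mxE expr0n.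
apply/rowP => i; rewrite mxE; apply/eqP; rewrite -sqrf_eq0.
by have /psumr_eq0P -> // := x0; move=> k _; apply: sqr_ge0.
Qed.

Lemma sqnorm_continuous m : continuous (@sqnorm R m).
Proof.
rewrite /sqnorm; under eq_fun do under eq_bigr do rewrite expr2.
apply: continuous_big => [|i _ y]; first exact: add_continuous.
by apply: continuousM; apply: coord_continuous.
Qed.

Lemma unit_sphere_compact m : compact [set x : 'rV[R]_m | sqnorm x = 1].
Proof.
apply: (@subclosed_compact _ _ [set x : 'rV[R]_m | forall i, `[-1, 1]%classic (x 0 i)]).
- apply: (@preimage_closed _ _ (@sqnorm R m) [set x | x = 1]); last exact: closed_eq.
  by move=> x _; apply: sqnorm_continuous.
- by apply: (@rV_compact R m (fun=> `[-1, 1]%classic)) => i; apply: segment_compact.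
- move=> x /= x1 i; rewrite in_itv /=.
  by have := sqr_coord_le_sqnorm x i; rewrite x1 => ?; apply/andP; split; nra.
Qed.

Lemma sqnorm_normalize m (x : 'rV[R]_m) :
  x != 0 -> exists2 k : R, k != 0 & sqnorm (k *: x) = 1.
Proof.
rewrite -sqnorm_eq0 => x0; have x_gt0 : 0 < sqnorm x.
  by rewrite lt_def x0 sumr_ge0 // => i _; apply: sqr_ge0.
exists (Num.sqrt (sqnorm x))^-1; first by rewrite invr_eq0 sqrtr_eq0 -ltNge.
by rewrite sqnormZ exprVn sqr_sqrtr ?ltW // mulVf.
Qed.

End SquaredNorm.

Lemma segment_scaled_sub (R : realFieldType) (V : lmodType R) (a d : V) (lam : R) :
  -1 <= lam <= 1 ->
  exists x, [set x + t *: (lam *: d) | t in `[0, 1]%classic] `<=`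
            [set a + s *: d | s in `[0, 1]%classic].
Proof.
move=> /andP [lamN1 lam1]; have [lam0|lam0] := leP 0 lam.
- exists a => _ [t + <-]; rewrite /= in_itv /= => /andP [t0 t1].
  exists (t * lam); last by rewrite scalerA.
  by rewrite /= in_itv /=; apply/andP; split; nra.
- exists (a + d) => _ [t + <-]; rewrite /= in_itv /= => /andP [t0 t1].
  exists (1 + t * lam); last by rewrite scalerA scalerDl scale1r addrA.
  by rewrite /= in_itv /=; apply/andP; split; nra.
Qed.

Section Rotations.
Variable R : realType.

Lemma rotation_tr m (Q : 'M[R]_m) : rotation Q -> rotation Q^T.
Proof. by case=> QQ detQ; split; [rewrite trmxK; apply: mulmx1C | rewrite det_tr]. Qed.

Lemma skew_unitmx m (A : 'M[R]_m) : A^T = - A -> 1%:M + A \in unitmx.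
Proof.
move=> skew; rewrite -row_free_unit; apply: inj_row_free => v vA0.
apply/eqP; rewrite -sqnorm_eq0.
have vAv : (v *m A *m v^T) 0 0 = 0.
  have : (v *m A *m v^T)^T = - (v *m A *m v^T).
    by rewrite !trmx_mul trmxK skew mulNmx mulmxN mulmxA.
  by move/matrixP/(_ 0 0); rewrite [LHS]mxE [RHS]mxE => ?; lra.
have : (sqnorm v)%:M = v *m (1%:M + A) *m v^T - v *m A *m v^T.
  by rewrite -sqnormE mulmxDr mulmx1 mulmxDl addrK.
rewrite vA0 mul0mx sub0r => /matrixP/(_ 0 0).
by rewrite [LHS]mxE [RHS]mxE vAv oppr0 mulr1n => ->.
Qed.

Lemma cayley_rotation m (A : 'M[R]_m) :
  A^T = - A -> rotation ((1%:M - A) *m invmx (1%:M + A)).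
Proof.
move=> skew; set X := 1%:M + A; set Y := 1%:M - A.
have uX : X \in unitmx by apply: skew_unitmx.
have XT : X^T = Y by rewrite /X linearD /= trmx1 skew.
have YT : Y^T = X by rewrite -XT trmxK.
have uY : Y \in unitmx by rewrite -XT unitmx_tr.
have XY : X *m Y = Y *m X.
  rewrite /X /Y mulmxDl mulmxBl !mul1mx !(mulmxBr, mulmxDr) !mulmx1 mulmxN.
  by rewrite opprD !addrA subrK addrK.
have YXV : Y *m invmx X = invmx X *m Y.
  by rewrite -[LHS](mulKmx uX) (mulmxA X) XY -(mulmxA Y) mulmxV // mulmx1.
split.
- rewrite trmx_mul trmx_inv XT YT YXV mulmxA -(mulmxA (invmx X)) mulmxV //.
  by rewrite mulmx1 mulVmx.
- rewrite det_mulmx det_inv -XT det_tr mulfV //.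
  by move: uX; rewrite unitmxE unitfE.
Qed.

Lemma rotation_to_unit m (e u : 'rV[R]_m) :
  sqnorm e = 1 -> sqnorm u = 1 -> 1 + (e *m u^T) 0 0 != 0 ->
  exists2 P, rotation P & e *m P = u.
Proof.
move=> e1 u1; set c := (e *m u^T) 0 0 => c1.
(* Cayley transform of the skew matrix (u^T e - e^T u) / (1 + <e, u>) *)
set A := (1 + c)^-1 *: (u^T *m e - e^T *m u).
have skew : A^T = - A.
  by rewrite /A linearZ /= linearB /= !trmx_mul !trmxK -scalerN opprB.
exists ((1%:M - A) *m invmx (1%:M + A)); first exact: cayley_rotation.
have ee : e *m e^T = 1%:M by rewrite sqnormE e1.
have uu : u *m u^T = 1%:M by rewrite sqnormE u1.
have eu : e *m u^T = c%:M by rewrite [LHS]mx11_scalar.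
have ue : u *m e^T = c%:M by rewrite -[LHS]trmxK trmx_mul trmxK eu tr_scalar_mx.
have eYuX : e *m (1%:M - A) = u *m (1%:M + A).
  rewrite mulmxBr mulmxDr !mulmx1 /A -!scalemxAr !mulmxBr !mulmxA eu ee ue uu.
  rewrite !mul_scalar_mx !scale1r; apply/rowP => j; rewrite !mxE.
  by field.
by rewrite mulmxA eYuX mulmxK // skew_unitmx.
Qed.

Lemma rotation_to_line m (e u : 'rV[R]_m) :
  sqnorm e = 1 -> sqnorm u = 1 ->
  exists2 P, rotation P & exists2 lam : R, lam != 0 & e *m P = lam *: u.
Proof.
move=> e1 u1; have [c1|c1] := eqVneq (1 + (e *m u^T) 0 0) 0; last first.
  have [P rP eP] := rotation_to_unit e1 u1 c1.
  by exists P => //; exists 1; rewrite ?oner_neq0 ?scale1r.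
exists 1%:M; first by split; rewrite ?trmx1 ?mulmx1 ?det1.
exists (-1); first by rewrite oppr_eq0 oner_neq0.
have : sqnorm (e + u) == 0 by rewrite sqnormD e1 u1; apply/eqP; lra.
by rewrite sqnorm_eq0 addr_eq0 => /eqP ->; rewrite mulmx1 scaleN1r.
Qed.

End Rotations.

Lemma finite_rotation_cover (R : realType) m (u : 'rV[R]_m) (O : set 'rV[R]_m) :
  sqnorm u = 1 -> open O -> (forall lam, lam != 0 -> O (lam *: u)) ->
  exists s : seq 'M[R]_m, (forall Q, Q \in s -> rotation Q) /\
    forall e, sqnorm e = 1 -> exists2 Q, Q \in s & O (e *m Q^T).
Proof.
move=> u1 oO Ou; have := @unit_sphere_compact R m; rewrite compact_cover.
move=> /(_ _ (@rotation R m) (fun Q => (fun x => x *m Q^T) @^-1` O)) [].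
- by move=> Q _; apply: open_comp => // x _; apply: mulmxr_continuous.
- move=> e e1; have [P rP [lam lam0 eP]] := rotation_to_line e1 u1.
  by exists P^T; [apply: rotation_tr | rewrite /= trmxK eP; apply: Ou].
- move=> D rD cover; exists (finmap.enum_fset D); split=> [Q /rD|e /cover [Q DQ OQ]].
    by rewrite inE.
  by exists Q.
Qed.

Definition last_coord n : 'I_(n + 1) := rshift n ord0.

Section Slope.
Variables (R : realType) (n : nat).
Implicit Types (w : 'rV[R]_(n + 1)) (v : 'rV[R]_n).

Definition slope w : 'rV[R]_n := (w 0 (last_coord n))^-1 *: lsubmx w.

Lemma slopeK w :
  w 0 (last_coord n) != 0 -> w = w 0 (last_coord n) *: row_mx (slope w) 1.
Proof.
move=> w0; rewrite -{1}[w]hsubmxK scale_row_mx scalerA mulfV // scale1r.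
by congr row_mx; apply/rowP => j; rewrite (ord1 j) !mxE eqxx mulr1.
Qed.

Lemma last_coord_row v : (row_mx v 1) 0 (last_coord n) = 1.
Proof. by rewrite row_mxEr mxE. Qed.

Lemma row_mx1_neq0 v : row_mx v 1 != 0.
Proof.
by apply/eqP => v10; have := last_coord_row v; rewrite v10 mxE => /eqP; rewrite eq_sym oner_eq0.
Qed.

Lemma last_coord_scale_row lam v : (lam *: row_mx v 1) 0 (last_coord n) = lam.
Proof. by rewrite mxE last_coord_row mulr1. Qed.

Lemma slope_scale_row lam v : lam != 0 -> slope (lam *: row_mx v 1) = v.
Proof.
move=> lam0; rewrite /slope last_coord_scale_row linearZ /= row_mxKl.
by rewrite scalerA mulVf ?scale1r.
Qed.

Lemma slope_continuous w : w 0 (last_coord n) != 0 -> {for w, continuous slope}.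
Proof.
move=> w0; apply: (@continuousZ _ _ _ (fun w => (w 0 (last_coord n))^-1) lsubmx).
  by apply: continuousV => //; apply: coord_continuous.
exact: continuous_lsubmx.
Qed.

Lemma open_slope_ball v (eps : R) :
  open [set w : 'rV[R]_(n + 1) | w 0 (last_coord n) != 0 /\ ball v eps (slope w)].
Proof.
rewrite openE => w [w0 slope_w]; near=> x; split; near: x.
  by apply: (@coord_continuous _ _ _ 0 (last_coord n) w [set y | y != 0]);
     apply: open_nbhs_nbhs; split => //; apply: open_neq.
by apply: (slope_continuous w0); apply: open_nbhs_nbhs; split => //; apply: ball_open.
Unshelve. all: by end_near.
Qed.

End Slope.

Lemma rotate_K0_segment (R : realType) n (K : set 'rV[R]_(n + n))
    (Q : 'M[R]_(n + 1)) (p : 'rV[R]_(n + n)) (e : 'rV[R]_(n + 1)) :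
  rotation Q -> K p -> sqnorm e = 1 ->
  (e *m Q^T) 0 (last_coord n) != 0 -> lsubmx p = slope (e *m Q^T) ->
  exists x, [set x + t *: e | t in `[0, 1]%classic] `<=` rotate Q (K0 K).
Proof.
move=> [QQ _] Kp e1 w0 slope_p.
set lam := (e *m Q^T) 0 (last_coord n).
set d := row_mx (lsubmx p) (1 : 'rV[R]_1).
have eQ : e = lam *: (d *m Q).
  have QTQ : Q^T *m Q = 1%:M by apply: mulmx1C.
  by rewrite scalemxAl /d slope_p -slopeK // -mulmxA QTQ mulmx1.
have lam1 : -1 <= lam <= 1.
  have := sqr_coord_le_sqnorm d (last_coord n); rewrite last_coord_row expr1n.
  by move: e1; rewrite eQ sqnormZ sqnorm_orthogonal // => ? ?; apply/andP; split; nra.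
have [x seg] := segment_scaled_sub (row_mx (rsubmx p) 0 *m Q) (d *m Q) lam1.
exists x; rewrite eQ; apply: (subset_trans seg) => _ [t t01 <-].
exists (row_mx (rsubmx p) 0 + t *: d); last by rewrite mulmxDl scalemxAl.
by exists p; split => //; exists t; split => //; move: t01; rewrite /= in_itv.
Qed.

Theorem proposition2p1 (R : realType) (n : nat) (hn : (0 < n)%N)
  (K : set 'rV[R]_(n + n)) (hK : compact K)
  (hint : (interior (pi0 (R:=R) (n:=n) @` K)) !=set0) :
  exists s : seq 'M[R]_(n + 1),
    (forall Q, Q \in s -> rotation Q) /\
    kakeya [set y | exists2 Q, Q \in s & rotate Q (K0 K) y].
Proof.
case: hint => v0 /nbhs_ballP [eps eps_gt0 ball_sub].
have [k k0 u1] : exists2 k : R, k != 0 & sqnorm (k *: row_mx v0 (1 : 'rV[R]_1)) = 1.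
  by apply: sqnorm_normalize; apply: row_mx1_neq0.
have [|s [rot_s cover]] := finite_rotation_cover u1 (@open_slope_ball _ _ v0 eps).
  move=> lam lam0; rewrite /= scalerA last_coord_scale_row slope_scale_row ?mulf_neq0 //.
  by split => //; apply: ballxx.
exists s; split => //; split; first exact/bigcup_rotate_compact/K0_compact.
move=> e e1; have [Q sQ [w0 /ball_sub [p Kp slope_p]]] := cover e e1.
have [x seg] := rotate_K0_segment (rot_s Q sQ) Kp e1 w0 slope_p.
by exists x => y /seg; exists Q.
Qed.
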